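(* Let $G$ be a finite connected graph with a real structure and let $G'$ be a connected component of $G(\mathbb R)$. Then $\deg(K_G|_{G'})=\sum_{v\in V(G')}K_G(v)$ is even, where $K_G=\sum_{v\in V(G)}(\operatorname{val}(v)-2)v$.
   Context: A finite graph $G$ has vertex set $V(G)$, edge set $E(G)$ and incidence function $\psi$ assigning to each edge a set of one or two vertices (loops and multiple edges allowed). $\operatorname{val}(v)$ denotes the valence (degree) of $v$ in $G$: the number of edges incident to $v$, each loop at $v$ counted twice. A real structure on $G$ is a pair of involutions of $V(G)$ and $E(G)$, written $v\mapsto\overline v$, $e\mapsto\overline e$, with $\psi(\overline e)=\overline{\psi(e)}$. A vertex/edge is real if fixed; a real edge is non-isolated if all its ends are real vertices. $G(\mathbb R)$ is the subgraph whose vertices are the real vertices and whose edges are the non-isolated real edges. *)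

From mathcomp Require Import all_boot all_order all_algebra.
Set Implicit Arguments. Unset Strict Implicit. Unset Printing Implicit Defensive.

(* A finite graph (loops and multiple edges allowed): finite vertex type V,
   finite edge type E, incidence psi : E -> {set V}, each edge having one or
   two ends. *)
Definition is_graph (V E : finType) (psi : E -> {set V}) : Prop :=
  forall e : E, 0 < #|psi e| <= 2.

Definition valence (V E : finType) (psi : E -> {set V}) (v : V) : nat :=
  \sum_(e : E | v \in psi e) (if #|psi e| == 1 then 2 else 1).

Definition adj (V E : finType) (psi : E -> {set V}) : rel V :=
  fun u w => [exists e : E, psi e == [set u; w]].

Definition connected_graph (V E : finType) (psi : E -> {set V}) : Prop :=
  forall u w : V, connect (adj psi) u w.

Definition real_structure (V E : finType) (psi : E -> {set V})
  (sv : V -> V) (se : E -> E) : Prop :=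
  involutive sv /\ involutive se /\ forall e, psi (se e) = sv @: psi e.

Definition real_vertex (V : finType) (sv : V -> V) (v : V) : bool := sv v == v.

Definition real_edge (V E : finType) (psi : E -> {set V})
  (sv : V -> V) (se : E -> E) (e : E) : bool :=
  (se e == e) && [forall v in psi e, real_vertex sv v].

(* Adjacency in G(R): vertices are real vertices, edges are non-isolated real
   edges. *)
Definition adjR (V E : finType) (psi : E -> {set V})
  (sv : V -> V) (se : E -> E) : rel V :=
  fun u w => [&& real_vertex sv u, real_vertex sv w &
              [exists e : E, real_edge psi sv se e && (psi e == [set u; w])]].

Definition real_component (V E : finType) (psi : E -> {set V})
  (sv : V -> V) (se : E -> E) (v0 : V) : {set V} :=
  [set w | real_vertex sv w & connect (adjR psi sv se) v0 w].

From mathcomp Require Import all_boot all_order all_algebra.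
Set Implicit Arguments. Unset Strict Implicit. Unset Printing Implicit Defensive.

(* Counting incidences between a vertex set A and the edges, the sum of the
   valences over A has the parity of the number of non-loop edges with exactly
   one end in A.  For A = V(G') these boundary edges are permuted by the real
   structure without fixed points: a real boundary edge would have both ends
   real and hence would join G' to a real vertex outside G'. *)

Lemma even_card_fixfree_involution (T : finType) (f : T -> T) (S : {set T}) :
  involutive f -> {in S, forall x, f x \in S} -> {in S, forall x, f x != x} ->
  2 %| #|S|.
Proof.
move=> fK fS f_fixfree; have f_inj : injective f := can_inj fK.
(* f swaps the elements of S below their image with those above it. *)
set P := [set x | (enum_rank x < enum_rank (f x))%N].
have fSP : f @: (S :&: P) = S :\: P.
  apply/setP => y; apply/imsetP/idP => [[x] | ].
    rewrite !inE => /andP [xS xP] ->; rewrite fS // fK andbT -leqNgt ltnW //.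
  rewrite !inE => /andP [yP yS]; exists (f y); last by rewrite fK.
  rewrite !inE fS //= fK ltn_neqAle leqNgt yP andbT.
  by apply: contra (f_fixfree y yS) => /eqP /val_inj /enum_rank_inj ->.
by rewrite -(cardsID P S) -fSP card_imset // addnn dvdn2 odd_double.
Qed.

Section IncidenceParity.

Variables (V E : finType) (psi : E -> {set V}).

Definition end_weight (e : E) : nat := if #|psi e| == 1 then 2 else 1.

Definition boundary (A : {set V}) : {set E} :=
  [set e | (#|psi e| == 2) && (#|A :&: psi e| == 1)].

Lemma sum_valence_incidences (A : {set V}) :
  \sum_(v in A) valence psi v = \sum_e end_weight e * #|A :&: psi e|.
Proof.
rewrite /valence (exchange_big_dep predT) //=; apply: eq_bigr => e _.
by rewrite sum_nat_cond_const mulnC.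
Qed.

Lemma even_incidences_off_boundary (A : {set V}) (e : E) :
  0 < #|psi e| <= 2 -> e \notin boundary A ->
  2 %| end_weight e * #|A :&: psi e|.
Proof.
rewrite inE negb_and /end_weight.
have := subset_leq_card (subsetIr A (psi e)).
move: #|A :&: psi e| #|psi e| => k n.
by case: n => [|[|[|n]]] //; case: k => [|[|[|k]]].
Qed.

Lemma even_sum_valence (A : {set V}) :
  is_graph psi -> 2 %| #|boundary A| -> 2 %| \sum_(v in A) valence psi v.
Proof.
move=> psi_graph even_boundary.
rewrite sum_valence_incidences (bigID [in boundary A]) /=.
apply: dvdn_add; last first.
  by apply: dvdn_sum => e; apply: even_incidences_off_boundary.
rewrite (eq_bigr (fun _ => 1)) ?sum1_card // => e.
by rewrite inE /end_weight => /andP [/eqP -> /eqP ->].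
Qed.

End IncidenceParity.

Section RealComponent.

Variables (V E : finType) (psi : E -> {set V}) (sv : V -> V) (se : E -> E).
Hypothesis real_psi : real_structure psi sv se.
Variable v0 : V.

Local Notation C := (real_component psi sv se v0).

Lemma real_component_real (x : V) : x \in C -> sv x = x.
Proof. by rewrite inE => /andP [/eqP]. Qed.

Lemma real_component_closed (u x : V) :
  u \in C -> adjR psi sv se u x -> x \in C.
Proof.
rewrite !inE => /andP [_ v0u] ux; move/and3P: (ux) => [_ -> _].
exact: connect_trans v0u (connect1 ux).
Qed.

Lemma real_component_incidences (e : E) :
  C :&: psi (se e) = sv @: (C :&: psi e).
Proof.
case: real_psi => svK [_ psi_se]; have sv_inj : injective sv := can_inj svK.
rewrite psi_se imsetI => [|x y _ _ /sv_inj //].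
congr (_ :&: _); rewrite -{1}(imset_id C); apply: eq_in_imset => x.
by move/real_component_real.
Qed.

Lemma boundary_real_component_stable (e : E) :
  e \in boundary psi C -> se e \in boundary psi C.
Proof.
case: real_psi => svK [_ psi_se]; have sv_inj : injective sv := can_inj svK.
by rewrite !inE real_component_incidences psi_se !card_imset.
Qed.

Lemma boundary_real_component_fixfree (e : E) :
  e \in boundary psi C -> se e != e.
Proof.
case: real_psi => svK [_ psi_se].
rewrite inE => /andP [psi_e2 C_e1]; apply/negP => /eqP se_e.
have [u C_e] := cards1P C_e1.
have /setIP [uC ue] : u \in C :&: psi e by rewrite C_e set11.
have [x xe xC] : exists2 x, x \in psi e & x \notin C.
  apply/subsetPn; apply: contraL psi_e2 => /setIidPr <-.
  by rewrite C_e cards1.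
have ux : u != x by apply: contraNneq xC => <-.
have psi_e : psi e = [set u; x].
  apply/esym/eqP; rewrite eqEcard (eqP psi_e2) cards2 ux andbT.
  by apply/subsetP => y; rewrite !inE => /orP [] /eqP ->.
have real_u : sv u = u by apply: real_component_real.
have real_x : sv x = x.
  have : sv x \in psi e by rewrite -se_e psi_se imset_f.
  rewrite psi_e !inE => /orP [] /eqP // sv_xu.
  by move: ux; rewrite -(svK x) sv_xu real_u eqxx.
have adj_ux : adjR psi sv se u x.
  rewrite /adjR /real_vertex real_u real_x !eqxx /=; apply/existsP; exists e.
  rewrite psi_e eqxx andbT /real_edge se_e eqxx /=.
  by apply/forall_inP => y; rewrite psi_e !inE => /orP [] /eqP ->; apply/eqP.
by rewrite (real_component_closed uC adj_ux) in xC.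
Qed.

Lemma even_sum_valence_real_component :
  is_graph psi -> 2 %| \sum_(v in C) valence psi v.
Proof.
move=> psi_graph; apply: even_sum_valence => //.
case: real_psi => _ [seK _].
apply: (even_card_fixfree_involution seK).
  exact: boundary_real_component_stable.
exact: boundary_real_component_fixfree.
Qed.

End RealComponent.

Import GRing.Theory.
Local Open Scope ring_scope.

Theorem proposition2 (V E : finType) (psi : E -> {set V})
  (sv : V -> V) (se : E -> E)
  (HG : is_graph psi) (Hconn : connected_graph psi)
  (Hreal : real_structure psi sv se)
  (v0 : V) (Hv0 : real_vertex sv v0) :
  (2 %| \sum_(v in real_component psi sv se v0) ((valence psi v)%:Z - 2))%Z.
Proof.
rewrite big_split /= -(big_morph Posz PoszD (erefl (Posz 0))).
apply: rpredD; first exact: even_sum_valence_real_component.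
by apply: rpred_sum => v _; rewrite rpredN.
Qed.
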